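(* Consider the uplink system and problem in the context, with the antenna-moving-region constraints $0\le x_m\le x_{\max}$, $0\le y_n\le y_{\max}$ omitted, and suppose each user has a single channel path. If $K(K-1)/2\le I_M+I_N$, where $I_M$ and $I_N$ denote the total number of prime factors (counted with multiplicity) of $M$ and $N$ respectively, then the lower bound $p_k\ge\bar p_k:=\frac{\sigma^2(2^{r_k}-1)}{MN|b_k|^2}$ ($1\le k\le K$) valid for all feasible points is tight: there exist feasible $(\mathbf{x},\mathbf{y},\mathbf{W},\mathbf{p})$ with $p_k=\bar p_k$ for all $k$ (so the minimum total transmit power equals $\sum_k\bar p_k$).
   Context: A base station has a cross-linked movable antenna array with $M$ columns and $N$ rows; horizontal APV $\mathbf{x}=[x_1,\dots,x_M]^{\mathrm T}\in\mathbb{R}^M$, vertical APV $\mathbf{y}=[y_1,\dots,y_N]^{\mathrm T}\in\mathbb{R}^N$, antenna $(m,n)$ at $(x_m,y_n)$. $K$ single-antenna users; user $k$ has a single path with complex coefficient $b_k\ne0$ and virtual angles $\vartheta_k,\varphi_k\in[-1,1]$, where different users have distinct virtual angles: $\vartheta_k\ne\vartheta_q$ and $\varphi_k\ne\varphi_q$ for $k\ne q$. With wavelength $\lambda>0$, the channel is $\mathbf{h}_k(\mathbf{x},\mathbf{y})=b_k\,\mathbf{a}^{\mathrm{hor}}_k(\mathbf{x})\otimes\mathbf{a}^{\mathrm{ver}}_k(\mathbf{y})$, with $\mathbf{a}^{\mathrm{hor}}_k(\mathbf{x})=[e^{-\mathrm{j}\frac{2\pi}{\lambda}x_m\vartheta_k}]_{m=1}^M$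 and $\mathbf{a}^{\mathrm{ver}}_k(\mathbf{y})=[e^{-\mathrm{j}\frac{2\pi}{\lambda}y_n\varphi_k}]_{n=1}^N$. With combining matrix $\mathbf{W}=[\mathbf{w}_1,\dots,\mathbf{w}_K]\in\mathbb{C}^{MN\times K}$, powers $p_k$, noise power $\sigma^2>0$, the SINR of user $k$ is $\gamma_k=\frac{|\mathbf{w}_k^{\mathrm H}\mathbf{h}_k|^2p_k}{\sum_{q\ne k}|\mathbf{w}_k^{\mathrm H}\mathbf{h}_q|^2p_q+\|\mathbf{w}_k\|_2^2\sigma^2}$. Feasibility means: $\log_2(1+\gamma_k)\ge r_k$, $p_k\ge0$ for all $k$ (given $r_k\ge0$), $x_{m+1}-x_m\ge d_{\min,x}$ for $1\le m\le M-1$, $y_{n+1}-y_n\ge d_{\min,y}$ for $1\le n\le N-1$, with given $d_{\min,x},d_{\min,y}>0$. The objective is to minimize $\sum_k p_k$. *)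

From mathcomp Require Import all_boot all_order all_algebra.
From mathcomp Require Export complex.
From mathcomp Require Export reals trigo exp.
Set Implicit Arguments. Unset Strict Implicit. Unset Printing Implicit Defensive.
Import Order.TTheory GRing.Theory Num.Theory.
Local Open Scope ring_scope.
Local Open Scope complex_scope.

Definition bigomega (n : nat) : nat := \sum_(p <- primes n) logn p n.

Section Model.
Variable R : realType.

Definition expj (t : R) : R[i] := (cos t +i* sin t).

Definition cabs2 (z : R[i]) : R := complex.Re z ^+ 2 + complex.Im z ^+ 2.

Variables (M N K : nat).

Definition a_hor (lambda : R) (x : 'I_M -> R) (th : R) : 'cV[R[i]]_M :=
  \col_m expj (- (2 * pi / lambda) * x m * th).
Definition a_ver (lambda : R) (y : 'I_N -> R) (ph : R) : 'cV[R[i]]_N :=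
  \col_n expj (- (2 * pi / lambda) * y n * ph).

(* Kronecker product u (x) v of column vectors, in the standard ordering:
   entry (m,n) sits at index mxvec_index m n = m * N + n. *)
Definition kron_cV (u : 'cV[R[i]]_M) (v : 'cV[R[i]]_N) : 'cV[R[i]]_(M * N) :=
  (mxvec (\matrix_(m < M, n < N) (u m 0 * v n 0)))^T.

Definition chan (lambda : R) (b : 'I_K -> R[i]) (th ph : 'I_K -> R)
  (x : 'I_M -> R) (y : 'I_N -> R) (k : 'I_K) : 'cV[R[i]]_(M * N) :=
  b k *: kron_cV (a_hor lambda x (th k)) (a_ver lambda y (ph k)).

Definition herm_ip (w h : 'cV[R[i]]_(M * N)) : R[i] :=
  \sum_i (w i 0)^* * h i 0.

Definition norm2sq (w : 'cV[R[i]]_(M * N)) : R := \sum_i cabs2 (w i 0).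

Definition sinr (lambda sigma2 : R) (b : 'I_K -> R[i]) (th ph : 'I_K -> R)
  (x : 'I_M -> R) (y : 'I_N -> R) (W : 'M[R[i]]_(M * N, K)) (p : 'I_K -> R)
  (k : 'I_K) : R :=
  let h := chan lambda b th ph x y in
  cabs2 (herm_ip (col k W) (h k)) * p k /
  (\sum_(q < K | q != k) cabs2 (herm_ip (col k W) (h q)) * p q
   + norm2sq (col k W) * sigma2).

Definition log2 (t : R) : R := ln t / ln 2.

Definition feasible (lambda sigma2 dminx dminy : R) (b : 'I_K -> R[i])
  (th ph : 'I_K -> R) (r : 'I_K -> R)
  (x : 'I_M -> R) (y : 'I_N -> R) (W : 'M[R[i]]_(M * N, K)) (p : 'I_K -> R)
  : Prop :=
  [/\ (forall k, log2 (1 + sinr lambda sigma2 b th ph x y W p k) >= r k),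
      (forall k, 0 <= p k),
      (forall (m : 'I_M) (hm : (m.+1 < M)%N), x (Ordinal hm) - x m >= dminx) &
      (forall (n : 'I_N) (hn : (n.+1 < N)%N), y (Ordinal hn) - y n >= dminy)].

Definition pbar (sigma2 : R) (b : 'I_K -> R[i]) (r : 'I_K -> R) (k : 'I_K) : R :=
  sigma2 * (2 `^ (r k) - 1) / ((M * N)%:R * cabs2 (b k)).

End Model.

(* The channel of a single-path user is b_k times the Kronecker product of a
   horizontal and a vertical steering vector, so the inner product of the
   channels of users k and q is b_k^* b_q times the product of two array factors
   AF(c, x) = sum_m exp(j c x_m), at the frequencies 2pi/lambda (th_k - th_q)
   and 2pi/lambda (ph_k - ph_q).  Write M = f_1 ... f_a with a = Omega(M) prime
   factors and place antenna m, written in mixed radix (d_1, ..., d_a), at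
   sum_l d_l D_l.  Then AF(c, x) is the product over l of the geometric sums
   sum_(d < f_l) exp(j c d D_l), and the l-th one vanishes when
   c D_l = 2pi (t + 1/f_l), t a natural number that can be taken large enough
   to respect the minimum spacing.  Giving each of the K(K-1)/2 pairs of users
   its own prime factor of M or N makes all channels pairwise orthogonal, and
   maximum-ratio combining with p_k = pbar_k then meets every rate constraint
   with equality.  Conversely, Cauchy-Schwarz bounds the SINR of user k by
   p_k M N |b_k|^2 / sigma^2, whence p_k >= pbar_k at every feasible point. *)

From mathcomp Require Import all_boot all_order all_algebra.
From mathcomp Require Import complex reals trigo exp.
From mathcomp Require Import ring lra.
Set Implicit Arguments. Unset Strict Implicit. Unset Printing Implicit Defensive.
Import Order.TTheory GRing.Theory Num.Theory.
Local Open Scope ring_scope.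

Lemma sum_unity_root_eq0 (F : idomainType) (n : nat) (z : F) :
  n.-unity_root z -> z != 1 -> \sum_(i < n) z ^+ i = 0.
Proof.
rewrite unity_rootE => /eqP zn1 z1; apply/eqP.
by have /eqP := subrX1 z n; rewrite zn1 subrr eq_sym mulf_eq0 subr_eq0 (negPf z1).
Qed.

Lemma sum_divmod (V : pzSemiRingType) (f P : nat) (F G : nat -> V) :
  \sum_(0 <= m < f * P) F (m %/ P)%N * G (m %% P)%N =
  (\sum_(0 <= i < f) F i) * (\sum_(0 <= j < P) G j).
Proof.
have [->|P_gt0] := posnP P; first by rewrite muln0 !(big_geq (leqnn 0)) mulr0.
elim: f => [|f IH]; first by rewrite mul0n !(big_geq (leqnn 0)) mul0r.
rewrite mulSn addnC (big_cat_nat (leq0n (f * P)) (leq_addr P (f * P))) /= IH.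
rewrite big_nat_recr //= mulrDl; congr (_ + _).
rewrite -{1}(add0n (f * P)%N) big_addn addKn mulr_sumr.
apply: eq_big_nat => j /andP[_ jP].
by rewrite [(j + _)%N]addnC divnMDl // divn_small // addn0 modnMDl modn_small.
Qed.

Lemma prime_factor_seq (n : nat) : (0 < n)%N -> exists fs : seq nat,
  [/\ (\prod_(f <- fs) f)%N = n, size fs = bigomega n &
      forall f, f \in fs -> (2 <= f)%N].
Proof.
move=> n_gt0; exists (flatten [seq nseq (logn p n) p | p <- primes n]); split.
- rewrite big_flatten /= big_map [RHS]prod_prime_decomp // prime_decompE big_map.
  by apply: eq_bigr => p _; rewrite big_nseq iter_muln_1.
- rewrite size_flatten /shape -map_comp sumnE big_map /bigomega.
  by apply: eq_bigr => p _ /=; rewrite size_nseq.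
move=> f /flattenP [s /mapP [p p_n ->]]; rewrite mem_nseq => /andP[_ /eqP ->].
by move: p_n; rewrite mem_primes => /andP[/prime_gt1].
Qed.

Section Expj.
Variable R : realType.
Implicit Types a c : R.

Lemma expjD a c : expj (a + c) = expj a * expj c.
Proof. by rewrite /expj; simpc; rewrite cosD sinD; congr (_ +i* _)%C; lra. Qed.

Lemma expj0 : expj (0 : R) = 1.
Proof. by rewrite /expj cos0 sin0. Qed.

Lemma conj_expj a : (expj a)^* = expj (- a).
Proof. by rewrite /expj cosN sinN. Qed.

Lemma expjMn a (n : nat) : expj (n%:R * a) = expj a ^+ n.
Proof.
elim: n => [|n IH]; first by rewrite mul0r expj0 expr0.
by rewrite -natr1 mulrDl mul1r expjD IH exprSr.
Qed.

Lemma expj_2pi (n : nat) : expj (pi *+ 2 *+ n) = 1 :> R[i].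
Proof.
rewrite /expj -[pi *+ 2 *+ n]add0r.
by rewrite (periodicn (@cosD2pi R)) (periodicn (@sinD2pi R)) cos0 sin0.
Qed.

Definition digit_spacing (c : R) (f t : nat) : R := pi *+ 2 / c * (t%:R + f%:R^-1).

Lemma sum_expj_digit_spacing (c : R) (f t : nat) : 0 < c -> (2 <= f)%N ->
  \sum_(0 <= i < f) expj (c * (i%:R * digit_spacing c f t)) = 0.
Proof.
move=> c_gt0 f_ge2; have f_gt0 : (0 : R) < f%:R by rewrite ltr0n (leq_trans _ f_ge2).
pose th : R := pi *+ 2 * (t%:R + f%:R^-1).
rewrite big_mkord (eq_bigr (fun i : 'I_f => expj th ^+ i)) => [|i _]; last first.
  by rewrite -expjMn mulrCA /digit_spacing [c * _]mulrA [c * _]mulrCA mulfV ?mulr1 // gt_eqF.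
apply: sum_unity_root_eq0.
  rewrite unity_rootE -expjMn /th mulrCA mulrDr mulfV ?(gt_eqF f_gt0) // -natrM natr1.
  by rewrite mulr_natr expj_2pi.
apply/eqP => /(congr1 (@complex.Re R)) /=.
rewrite /th mulrDr addrC mulr_natr (periodicn (@cosD2pi R)).
have pi_gt0 := pi_gt0 R.
have arg_gt0 : 0 < pi *+ 2 / f%:R :> R by rewrite divr_gt0 // mulrn_wgt0.
have arg_le_pi : pi *+ 2 / f%:R <= pi :> R.
  by rewrite ler_pdivrMr // -[pi *+ 2]mulr_natr ler_pM2l // ler_nat.
have := @ltr_cos R 0 (pi *+ 2 / f%:R).
rewrite !in_itv /= lexx (ltW pi_gt0) (ltW arg_gt0) arg_le_pi arg_gt0 cos0.
by move=> /(_ isT isT) + cos_eq1; rewrite cos_eq1 ltxx.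
Qed.

Lemma digit_spacing_ge (c B : R) (f : nat) : 0 < c ->
  exists t : nat, B <= digit_spacing c f t.
Proof.
move=> c_gt0; exists (Num.truncn (B * c / (pi *+ 2))).+1; rewrite /digit_spacing.
have := truncnS_gt (B * c / (pi *+ 2)).
have : 0 < pi *+ 2 :> R by rewrite mulrn_wgt0 // pi_gt0.
move: (pi *+ 2) (Num.truncn _).+1 => p2 t p2_gt0 Bt.
have -> : B = p2 / c * (B * c / p2) by field; rewrite !gt_eqF.
have f_inv_ge0 : 0 <= f%:R^-1 :> R by rewrite invr_ge0.
by rewrite ler_wpM2l ?divr_ge0 ?(ltW p2_gt0) ?(ltW c_gt0) //; lra.
Qed.

End Expj.

Section MixedRadix.
Variable R : realType.

Definition add_digit (P : nat) (D : R) (z : nat -> R) (m : nat) : R :=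
  (m %/ P)%N%:R * D + z (m %% P)%N.

Lemma add_digit_gap (P : nat) (D g : R) (z : nat -> R) : (0 < P)%N ->
  (forall m, (m.+1 < P)%N -> g <= z m.+1 - z m) -> z P.-1 - z 0%N + g <= D ->
  forall m, g <= add_digit P D z m.+1 - add_digit P D z m.
Proof.
move=> P_gt0 gap_z D_ge m; rewrite /add_digit.
rewrite {1 2}(divn_eq m P); move: (ltn_pmod m P_gt0).
move: (m %/ P)%N (m %% P)%N => q r rP.
have [rS|rE] := ltnP r.+1 P.
  rewrite -addnS divnMDl // divn_small // addn0 modnMDl modn_small //.
  by have := gap_z r rS; lra.
have {rE}rE : r.+1 = P by apply/eqP; rewrite eqn_leq rE rP.
rewrite -addnS rE -mulSnr mulnK // modnMl -natr1; move: D_ge; rewrite -rE /=; lra.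
Qed.

Lemma sum_expj_add_digit (P f : nat) (D c : R) (z : nat -> R) :
  \sum_(0 <= m < f * P) expj (c * add_digit P D z m) =
  (\sum_(0 <= i < f) expj (c * (i%:R * D))) * \sum_(0 <= j < P) expj (c * z j).
Proof.
by rewrite -sum_divmod; apply: eq_bigr => m _; rewrite /add_digit mulrDr expjD.
Qed.

Lemma spaced_array_exists (g : R) (fs : seq nat) (cs : seq R) : 0 < g ->
  (forall f, f \in fs -> (2 <= f)%N) -> (forall c, c \in cs -> 0 < c) ->
  (size cs <= size fs)%N ->
  exists z : nat -> R,
    (forall m, (m.+1 < \prod_(f <- fs) f)%N -> g <= z m.+1 - z m) /\
    (forall c, c \in cs -> \sum_(0 <= m < (\prod_(f <- fs) f)%N) expj (c * z m) = 0).
Proof.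
move=> g_gt0; elim: fs cs => [|f fs IH] cs fs_ge2 cs_gt0 size_cs.
  move: size_cs; rewrite leqn0 => /nilP ->.
  by exists (fun=> 0); split=> // m; rewrite big_nil.
have f_ge2 : (2 <= f)%N by apply: fs_ge2; rewrite mem_head.
have fs_ge2' f' : f' \in fs -> (2 <= f')%N.
  by move=> f'_fs; apply: fs_ge2; rewrite inE f'_fs orbT.
set c0 := head 1 cs.
have c0_gt0 : 0 < c0 by case: cs cs_gt0 {size_cs} @c0 => //= c cs; apply; rewrite mem_head.
have cs_gt0' c : c \in behead cs -> 0 < c by move/mem_behead; exact: cs_gt0.
have sub_cs : {subset cs <= c0 :: behead cs}.
  by case: cs {cs_gt0 size_cs c0_gt0 cs_gt0'} @c0 => [|c cs] x.
have size_cs' : (size (behead cs) <= size fs)%N.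
  by rewrite size_behead -subn1 leq_subLR add1n.
have [z [gap_z sum_z]] := IH (behead cs) fs_ge2' cs_gt0' size_cs'.
set P := (\prod_(f <- fs) f)%N.
have P_gt0 : (0 < P)%N by rewrite /P big_seq prodn_cond_gt0 // => f' /fs_ge2' /ltnW.
have [t D_ge] := digit_spacing_ge (z P.-1 - z 0%N + g) f c0_gt0.
exists (add_digit P (digit_spacing c0 f t) z); split=> [m _|c c_cs].
  exact: add_digit_gap.
rewrite big_cons -/P sum_expj_add_digit.
move/sub_cs: c_cs; rewrite inE => /orP[/eqP->|c_cs']; last by rewrite sum_z ?mulr0.
by rewrite sum_expj_digit_spacing ?mul0r.
Qed.

End MixedRadix.

Section ComplexSums.
Variable R : realType.
Implicit Types z w : R[i].

Lemma cabs2_ge0 z : 0 <= cabs2 z.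
Proof. by rewrite /cabs2 addr_ge0 // sqr_ge0. Qed.

Lemma cabs2_eq0 z : (cabs2 z == 0) = (z == 0).
Proof.
case: z => a c; rewrite /cabs2 /= paddr_eq0 ?sqr_ge0 // !sqrf_eq0.
by apply/andP/eqP => [[/eqP-> /eqP->] | [-> ->]].
Qed.

Lemma cabs20 : cabs2 (0 : R[i]) = 0.
Proof. by apply/eqP; rewrite cabs2_eq0. Qed.

Lemma cabs2_gt0 z : (0 < cabs2 z) = (z != 0).
Proof. by rewrite lt_def cabs2_eq0 cabs2_ge0 andbT. Qed.

Lemma cabs2_real (t : R) : cabs2 t%:C%C = t ^+ 2.
Proof. by rewrite /cabs2 /= expr0n addr0. Qed.

Lemma mul_conjC_self z : z^* * z = (cabs2 z)%:C%C.
Proof. by case: z => a c; rewrite /cabs2; simpc; congr (_ +i* _)%C => /=; lra. Qed.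

Lemma cabs2_sum_conjCM_le (n : nat) (u v : 'I_n -> R[i]) :
  cabs2 (\sum_i (u i)^* * v i) <= (\sum_i cabs2 (u i)) * (\sum_i cabs2 (v i)).
Proof.
pose a i := complex.Re (u i); pose b i := complex.Im (u i).
pose c i := complex.Re (v i); pose d i := complex.Im (v i).
set A := \sum_i cabs2 (u i); set B := \sum_i cabs2 (v i).
set X := \sum_i (a i * c i + b i * d i); set Y := \sum_i (a i * d i - b i * c i).
have -> : cabs2 (\sum_i (u i)^* * v i) = X ^+ 2 + Y ^+ 2.
  have ReD z w : complex.Re (z + w) = complex.Re z + complex.Re w by case: z; case: w.
  have ImD z w : complex.Im (z + w) = complex.Im z + complex.Im w by case: z; case: w.
  rewrite /cabs2 (big_morph _ ReD (erefl : complex.Re 0 = 0)).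
  rewrite (big_morph _ ImD (erefl : complex.Im 0 = 0)).
  by congr (_ ^+ 2 + _ ^+ 2); apply: eq_bigr => i _;
    rewrite /a /b /c /d; case: (u i) => ? ?; case: (v i) => ? ?; simpc => /=; ring.
have A_ge0 : 0 <= A by apply: sumr_ge0 => i _; exact: cabs2_ge0.
have [A_eq0|A_neq0] := eqVneq A 0.
  have u0 i : u i = 0.
    by apply/eqP; rewrite -cabs2_eq0; move/psumr_eq0P: A_eq0 => -> // j _; exact: cabs2_ge0.
  have -> : X = 0 by rewrite /X big1 // => i _; rewrite /a /b u0 /=; ring.
  have -> : Y = 0 by rewrite /Y big1 // => i _; rewrite /a /b u0 /=; ring.
  by rewrite A_eq0 expr0n addr0 mul0r.
rewrite -subr_ge0 -(pmulr_rge0 _ (_ : 0 < A)) ?lt_def ?A_neq0 //.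
(* A (A B - |X + iY|^2) is the squared norm of A v - (X + iY) u. *)
have -> : A * (A * B - (X ^+ 2 + Y ^+ 2)) =
    \sum_i ((A * c i - (X * a i - Y * b i)) ^+ 2 + (A * d i - (X * b i + Y * a i)) ^+ 2).
  transitivity (\sum_i (A ^+ 2 * cabs2 (v i) - 2 * A * X * (a i * c i + b i * d i)
      - 2 * A * Y * (a i * d i - b i * c i) + (X ^+ 2 + Y ^+ 2) * cabs2 (u i))).
    by rewrite big_split /= !sumrB -!mulr_sumr -/A -/B -/X -/Y; ring.
  by apply: eq_bigr => i _; rewrite /cabs2 -/(a i) -/(b i) -/(c i) -/(d i); ring.
by apply: sumr_ge0 => i _; rewrite addr_ge0 // sqr_ge0.
Qed.

End ComplexSums.

Section ArrayFactor.
Variable R : realType.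

Definition array_factor (n : nat) (c : R) (z : 'I_n -> R) : R[i] :=
  \sum_(m < n) expj (c * z m).

Lemma array_factor0 (n : nat) (z : 'I_n -> R) : array_factor 0 z = n%:R.
Proof.
rewrite /array_factor (eq_bigr (fun=> 1)) => [|m _]; last by rewrite mul0r expj0.
by rewrite sumr_const card_ord.
Qed.

Lemma array_factorN (n : nat) (c : R) (z : 'I_n -> R) :
  array_factor (- c) z = (array_factor c z)^*.
Proof.
by rewrite /array_factor rmorph_sum; apply: eq_bigr => m _; rewrite mulNr -conj_expj.
Qed.

Lemma array_factor_normr_eq0 (n : nat) (c : R) (z : 'I_n -> R) :
  array_factor `|c| z = 0 -> array_factor c z = 0.
Proof.
have [//|_] := ger0P c.
by rewrite array_factorN => /(congr1 Num.conj); rewrite conjCK rmorph0.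
Qed.

Lemma orthogonal_array_exists (n : nat) (g : R) (cs : seq R) :
  (0 < n)%N -> 0 < g -> (forall c, c \in cs -> 0 < c) ->
  (size cs <= bigomega n)%N ->
  exists z : 'I_n -> R,
    (forall (m : 'I_n) (hm : (m.+1 < n)%N), z (Ordinal hm) - z m >= g) /\
    (forall c, `|c| \in cs -> array_factor c z = 0).
Proof.
move=> n_gt0 g_gt0 cs_gt0 size_cs.
have [fs [prod_fs size_fs fs_ge2]] := prime_factor_seq n_gt0.
rewrite -size_fs in size_cs.
have [z [gap_z sum_z]] := spaced_array_exists g_gt0 fs_ge2 cs_gt0 size_cs.
rewrite prod_fs in gap_z sum_z.
exists (fun m => z m); split=> [m hm|c c_cs]; first exact: gap_z.
by apply: array_factor_normr_eq0; move: (sum_z _ c_cs); rewrite big_mkord.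
Qed.

Lemma steering_ip (n : nat) (lam : R) (z : 'I_n -> R) (a c : R) :
  \sum_m ((a_hor lam z a) m 0)^* * (a_hor lam z c) m 0 =
  array_factor (2 * pi / lam * (a - c)) z.
Proof.
by apply: eq_bigr => m _; rewrite !mxE conj_expj -expjD; congr expj; ring.
Qed.

End ArrayFactor.

Section Channel.
Variables (R : realType) (M N K : nat).

Lemma herm_ip_kron (u u' : 'cV[R[i]]_M) (v v' : 'cV[R[i]]_N) :
  herm_ip (kron_cV u v) (kron_cV u' v') =
  (\sum_m (u m 0)^* * u' m 0) * (\sum_n (v n 0)^* * v' n 0).
Proof.
rewrite /herm_ip (reindex _ (curry_mxvec_bij _ _)) /=.
rewrite big_distrlr pair_bigA /=; apply: eq_bigr => [[m n]] _ /=.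
by rewrite /kron_cV !mxE !mxvecE !mxE rmorphM /=; ring.
Qed.

Lemma herm_ipZ (a c : R[i]) (w w' : 'cV[R[i]]_(M * N)) :
  herm_ip (a *: w) (c *: w') = a^* * c * herm_ip w w'.
Proof.
by rewrite /herm_ip mulr_sumr; apply: eq_bigr => i _; rewrite !mxE rmorphM /=; ring.
Qed.

Lemma herm_ip_self (w : 'cV[R[i]]_(M * N)) : herm_ip w w = (norm2sq w)%:C%C.
Proof.
by rewrite /norm2sq rmorph_sum; apply: eq_bigr => i _; exact: mul_conjC_self.
Qed.

Variables (lam : R) (b : 'I_K -> R[i]) (th ph : 'I_K -> R).
Variables (x : 'I_M -> R) (y : 'I_N -> R).
Let h := chan lam b th ph x y.

Lemma herm_ip_chan k q : herm_ip (h k) (h q) =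
  (b k)^* * b q * (array_factor (2 * pi / lam * (th k - th q)) x *
                   array_factor (2 * pi / lam * (ph k - ph q)) y).
Proof. by rewrite herm_ipZ herm_ip_kron !steering_ip. Qed.

Lemma norm2sq_chan k : norm2sq (h k) = cabs2 (b k) * (M * N)%:R.
Proof.
apply: (@complexI R); rewrite -herm_ip_self herm_ip_chan !subrr !mulr0 !array_factor0.
by rewrite mul_conjC_self rmorphM /= rmorph_nat natrM.
Qed.

End Channel.

Lemma log2_geE (R : realType) (r s : R) : 0 < s -> (r <= log2 s) = (2 `^ r <= s).
Proof.
move=> s_gt0; have ln2_gt0 : 0 < ln (2 : R) by rewrite ln_gt0 // ltr1n.
by rewrite /log2 ler_pdivlMr // /powR pnatr_eq0 /= -ler_expR lnK.
Qed.

Section PowerBound.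
Variables (R : realType) (M N K : nat).
Variables (lam sigma2 dminx dminy : R) (b : 'I_K -> R[i]) (th ph r : 'I_K -> R).
Hypotheses (M_gt0 : (0 < M)%N) (N_gt0 : (0 < N)%N) (sigma2_gt0 : 0 < sigma2).
Let gain k := cabs2 (b k) * (M * N)%:R.

Lemma gain_gt0 k : b k != 0 -> 0 < gain k.
Proof. by move=> bk; rewrite mulr_gt0 ?cabs2_gt0 // ltr0n muln_gt0 M_gt0. Qed.

Lemma sinr_mul_le (x : 'I_M -> R) (y : 'I_N -> R) (W : 'M[R[i]]_(M * N, K))
    (p : 'I_K -> R) k :
  (forall q, 0 <= p q) -> sinr lam sigma2 b th ph x y W p k * sigma2 <= gain k * p k.
Proof.
move=> p_ge0; rewrite /sinr /=; set h := chan lam b th ph x y.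
set A := norm2sq (col k W); set C := cabs2 (herm_ip (col k W) (h k)).
set I := \sum_(q < K | q != k) _.
have A_ge0 : 0 <= A by apply: sumr_ge0 => i _; exact: cabs2_ge0.
have I_ge0 : 0 <= I by apply: sumr_ge0 => q _; rewrite mulr_ge0 ?cabs2_ge0.
have gain_ge0 : 0 <= gain k by rewrite mulr_ge0 ?cabs2_ge0.
have pk_ge0 := p_ge0 k.
have CS : C <= A * gain k.
  by rewrite /gain -(norm2sq_chan lam b th ph x y); exact: cabs2_sum_conjCM_le.
have [A_eq0|A_neq0] := eqVneq A 0.
  have C0 : C = 0 by apply/eqP; rewrite eq_le cabs2_ge0 andbT -(mul0r (gain k)) -A_eq0.
  by rewrite C0 !mul0r mulr_ge0.
have den_gt0 : 0 < I + A * sigma2 by rewrite ltr_wpDl // mulr_gt0 // lt_def A_neq0.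
rewrite mulrAC ler_pdivrMr //.
have : C * (p k * sigma2) <= A * gain k * (p k * sigma2).
  by rewrite ler_wpM2r // mulr_ge0 // ltW.
have : gain k * p k * (A * sigma2) <= gain k * p k * (I + A * sigma2).
  by apply: ler_wpM2l; [rewrite mulr_ge0 | lra].
nra.
Qed.

Lemma pbar_le_feasible (x : 'I_M -> R) (y : 'I_N -> R) (W : 'M[R[i]]_(M * N, K))
    (p : 'I_K -> R) k : b k != 0 ->
  feasible lam sigma2 dminx dminy b th ph r x y W p -> pbar M N sigma2 b r k <= p k.
Proof.
move=> bk [rate p_ge0 _ _]; set s := sinr lam sigma2 b th ph x y W p k.
have s_ge0 : 0 <= s.
  rewrite /s /sinr divr_ge0 ?mulr_ge0 ?cabs2_ge0 ?addr_ge0 ?sumr_ge0 // => [q _|].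
    by rewrite mulr_ge0 ?cabs2_ge0.
  by rewrite mulr_ge0 ?(ltW sigma2_gt0) // sumr_ge0 // => i _; exact: cabs2_ge0.
have := rate k; rewrite log2_geE -/s ?ltr_pwDl // -lerBlDl => pow_le.
have := sinr_mul_le x y W k p_ge0; rewrite -/s => s_le.
rewrite /pbar ler_pdivrMr; last by rewrite mulrC gain_gt0.
rewrite [_ * cabs2 _]mulrC -/(gain k).
have : (2 `^ r k - 1) * sigma2 <= s * sigma2 by rewrite ler_wpM2r // ltW.
lra.
Qed.

Definition mrc (x : 'I_M -> R) (y : 'I_N -> R) : 'M[R[i]]_(M * N, K) :=
  \matrix_(i, q) chan lam b th ph x y q i 0.

Lemma sinr_mrc (x : 'I_M -> R) (y : 'I_N -> R) (p : 'I_K -> R) k : b k != 0 ->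
  (forall q, q != k ->
     herm_ip (chan lam b th ph x y k) (chan lam b th ph x y q) = 0) ->
  sinr lam sigma2 b th ph x y (mrc x y) p k = gain k * p k / sigma2.
Proof.
move=> bk ortho; have col_mrc : col k (mrc x y) = chan lam b th ph x y k.
  by apply/colP => i; rewrite !mxE.
rewrite /sinr /= col_mrc big1 => [|q qk]; last by rewrite ortho // cabs20 mul0r.
rewrite add0r herm_ip_self cabs2_real norm2sq_chan -/(gain k).
by field; rewrite !gt_eqF ?gain_gt0.
Qed.

Lemma mrc_pbar_feasible (x : 'I_M -> R) (y : 'I_N -> R) :
  (forall k, b k != 0) -> (forall k, 0 <= r k) ->
  (forall k q, k != q ->
     herm_ip (chan lam b th ph x y k) (chan lam b th ph x y q) = 0) ->
  (forall (m : 'I_M) (hm : (m.+1 < M)%N), x (Ordinal hm) - x m >= dminx) ->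
  (forall (n : 'I_N) (hn : (n.+1 < N)%N), y (Ordinal hn) - y n >= dminy) ->
  feasible lam sigma2 dminx dminy b th ph r x y (mrc x y) (pbar M N sigma2 b r).
Proof.
move=> b_neq0 r_ge0 ortho gap_x gap_y.
have pow_ge1 k : 1 <= 2 `^ r k.
  by rewrite -{1}(powRr0 2) (ler_powR _ (r_ge0 k)) // ler1n.
split=> // k.
  rewrite sinr_mrc // => [|q qk]; last by rewrite ortho // eq_sym.
  have -> : gain k * pbar M N sigma2 b r k / sigma2 = 2 `^ r k - 1.
    by rewrite /pbar /gain; field; rewrite !gt_eqF ?cabs2_gt0 // ?ltr0n ?M_gt0 ?N_gt0.
  by rewrite addrC subrK log2_geE ?powR_gt0.
by rewrite /pbar divr_ge0 ?mulr_ge0 ?(ltW sigma2_gt0) ?subr_ge0 ?cabs2_ge0.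
Qed.

End PowerBound.

Section Pairs.
Variables (R : realType) (K : nat).

Definition pairs : seq {set 'I_K} := enum [set A : {set 'I_K} | #|A| == 2].

Lemma size_pairs : size pairs = (K * (K - 1) %/ 2)%N.
Proof. by rewrite -cardE card_draws card_ord bin2 subn1 divn2. Qed.

Lemma set2_in_pairs k q : k != q -> [set k; q] \in pairs.
Proof. by rewrite mem_enum inE cards2 => ->. Qed.

Definition spread (g : 'I_K -> R) (A : {set 'I_K}) : R :=
  (\sum_(i in A) \sum_(j in A) `|g i - g j|) / 2.

Lemma spread_set2 (g : 'I_K -> R) k q : k != q -> spread g [set k; q] = `|g k - g q|.
Proof.
move=> kq; have kNq : k \notin [set q] by rewrite in_set1.
rewrite /spread big_setU1 // big_set1 !big_setU1 // !big_set1 /= !subrr normr0.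
by rewrite distrC; field.
Qed.

Lemma spread_gt0 (g : 'I_K -> R) A : (forall k q, k != q -> g k != g q) ->
  A \in pairs -> 0 < spread g A.
Proof.
move=> g_inj; rewrite mem_enum inE => /cards2P[k [q [kq ->]]].
by rewrite spread_set2 // normr_gt0 subr_eq0 g_inj.
Qed.

End Pairs.

Theorem theorem2 (R : realType) (M N K : nat)
  (lambda sigma2 dminx dminy : R) (b : 'I_K -> R[i]) (th ph r : 'I_K -> R) :
  (0 < M)%N -> (0 < N)%N ->
  0 < lambda -> 0 < sigma2 -> 0 < dminx -> 0 < dminy ->
  (forall k, b k != 0) ->
  (forall k, -1 <= th k <= 1) -> (forall k, -1 <= ph k <= 1) ->
  (forall k q, k != q -> th k != th q) ->
  (forall k q, k != q -> ph k != ph q) ->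
  (forall k, 0 <= r k) ->
  (K * (K - 1) %/ 2 <= bigomega M + bigomega N)%N ->
  (exists (x : 'I_M -> R) (y : 'I_N -> R) (W : 'M[R[i]]_(M * N, K))
          (p : 'I_K -> R),
      feasible lambda sigma2 dminx dminy b th ph r x y W p /\
      forall k, p k = pbar M N sigma2 b r k)
  /\
  (forall (x : 'I_M -> R) (y : 'I_N -> R) (W : 'M[R[i]]_(M * N, K))
          (p : 'I_K -> R),
      feasible lambda sigma2 dminx dminy b th ph r x y W p ->
      \sum_k pbar M N sigma2 b r k <= \sum_k p k).
Proof.
move=> M_gt0 N_gt0 lam_gt0 s_gt0 dx_gt0 dy_gt0 b_neq0 _ _ th_inj ph_inj r_ge0 n_pairs.
split; last first.
  by move=> x y W p feas; apply: ler_sum => k _; exact: pbar_le_feasible feas.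
have wavenum_gt0 : 0 < 2 * pi / lambda by rewrite divr_gt0 // mulr_gt0 // pi_gt0.
pose freq (g : 'I_K -> R) A := 2 * pi / lambda * spread g A.
have freq_set2 g k q : k != q -> `|2 * pi / lambda * (g k - g q)| = freq g [set k; q].
  by move=> kq; rewrite /freq normrM spread_set2 // gtr0_norm.
have freq_gt0 g s : (forall k q, k != q -> g k != g q) -> {subset s <= pairs K} ->
    forall c, c \in map (freq g) s -> 0 < c.
  by move=> g_inj sub_s _ /mapP[A /sub_s A_pairs ->]; rewrite mulr_gt0 ?spread_gt0.
set xpairs := take (bigomega M) (pairs K); set ypairs := drop (bigomega M) (pairs K).
have size_x : (size (map (freq th) xpairs) <= bigomega M)%N.
  by rewrite size_map size_take_min geq_minl.
have size_y : (size (map (freq ph) ypairs) <= bigomega N)%N.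
  by rewrite size_map size_drop leq_subLR size_pairs.
have [x [gap_x af_x]] := orthogonal_array_exists M_gt0 dx_gt0
  (freq_gt0 th _ th_inj (@mem_take _ _ _)) size_x.
have [y [gap_y af_y]] := orthogonal_array_exists N_gt0 dy_gt0
  (freq_gt0 ph _ ph_inj (@mem_drop _ _ _)) size_y.
exists x, y, (mrc lambda b th ph x y), (pbar M N sigma2 b r); split=> //.
apply: mrc_pbar_feasible => // k q kq; rewrite herm_ip_chan.
have : [set k; q] \in xpairs ++ ypairs by rewrite cat_take_drop set2_in_pairs.
rewrite mem_cat => /orP[kq_x|kq_y]; first by rewrite af_x ?mul0r ?mulr0 // freq_set2 // map_f.
by rewrite (af_y (2 * pi / lambda * (ph k - ph q))) ?mulr0 // freq_set2 // map_f.
Qed.
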